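(* Let $X$ be a $T_0$ $k$-bounded sober space. If the $\operatorname{Irr}$-convergence class $\mathcal{I}$ on $X$ satisfies the (Iterated limits) axiom, then $X$ is $\operatorname{Irr}$-continuous.
   Context: For a topological space $X$, a nonempty subset $E$ is irreducible if whenever $E\subseteq A_1\cup A_2$ with $A_1,A_2$ closed, $E\subseteq A_1$ or $E\subseteq A_2$. The specialisation order is $x\le y$ iff $x\in\operatorname{cl}(\{y\})$; $\uparrow x=\{z:z\ge x\}$; $\bigvee$ denotes supremum in this order. $\operatorname{Irr}^+(X)$ is the set of irreducible subsets whose supremum exists. $X$ is $k$-bounded sober if every closed set $F\in\operatorname{Irr}^+(X)$ is the closure of a unique singleton. $x\ll_{\operatorname{Irr}} y$ iff for every $E\in\operatorname{Irr}^+(X)$ with $\bigvee E\ge y$, $E\cap\uparrow x\ne\emptyset$; $\twoheaddownarrow_{\operatorname{Irr}} x=\{y:y\ll_{\operatorname{Irr}} x\}$. $X$ is $\operatorname{Irr}$-continuous if for every $x$, $\twoheaddownarrow_{\operatorname{Irr}} x$ is irreducible and $x=\bigvee\twoheaddownarrow_{\operatorname{Irr}} x$. A net $(x_i)_{i\in I}$ is a map from a preorder $(I,\le)$ to $X$. It $\operatorname{Irr}$-converges to $y$ if there is $E\in\operatorname{Irr}^+(X)$ with $\bigvee E\ge y$ such that for each $e\in E$ there is $k(e)\in I$ with $x_i\ge e$ for all $i\ge k(e)$; $\mathcal{I}$ is the set of pairs $((x_i)_{i\in I},y)$ with $(x_i)$ $\operatorname{Irr}$-converging to $y$. (Iterated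 limits) for $\mathcal{I}$: if $((x_i)_{i\in I},x)\in\mathcal{I}$ and $((x_{i,j})_{j\in J(i)},x_i)\in\mathcal{I}$ for all $i\in I$, then $((x_{i,f(i)})_{(i,f)\in I\times M},x)\in\mathcal{I}$, where $M=\prod_{i\in I}J(i)$ and $I\times M$ carries the product preorder ($(i,f)\le(i',f')$ iff $i\le i'$ and $f(l)\le f'(l)$ for all $l$). *)

From HB Require Import structures.
From mathcomp Require Import all_boot all_order.
From mathcomp Require Import all_classical topology.
Set Implicit Arguments. Unset Strict Implicit. Unset Printing Implicit Defensive.
Local Open Scope classical_set_scope.

Section IrrDefs.
Context {X : topologicalType}.

Definition spec_le (x y : X) : Prop := closure [set y] x.

Definition upset (x : X) : set X := [set z | spec_le x z].

Definition is_sup (E : set X) (s : X) : Prop :=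
  (forall e, E e -> spec_le e s) /\
  (forall u, (forall e, E e -> spec_le e u) -> spec_le s u).

Definition irreducible (E : set X) : Prop :=
  E !=set0 /\
  forall A1 A2 : set X, closed A1 -> closed A2 ->
    E `<=` A1 `|` A2 -> E `<=` A1 \/ E `<=` A2.

Definition IrrPlus (E : set X) : Prop := irreducible E /\ exists s, is_sup E s.

Definition k_bounded_sober : Prop :=
  forall F : set X, closed F -> IrrPlus F -> exists! x : X, F = closure [set x].

Definition irr_way_below (x y : X) : Prop :=
  forall E : set X, IrrPlus E ->
    forall s, is_sup E s -> spec_le y s -> E `&` upset x !=set0.

Definition irr_ddown (x : X) : set X := [set y | irr_way_below y x].

Definition irr_continuous : Prop :=
  forall x : X, irreducible (irr_ddown x) /\ is_sup (irr_ddown x) x.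

Definition is_preorder (I : Type) (le : I -> I -> Prop) : Prop :=
  (forall i, le i i) /\ (forall i j k, le i j -> le j k -> le i k).

Definition irr_converges (I : Type) (le : I -> I -> Prop) (x : I -> X) (y : X) : Prop :=
  exists E : set X, IrrPlus E /\ (exists s, is_sup E s /\ spec_le y s) /\
    forall e, E e -> exists k : I, forall i, le k i -> spec_le e (x i).

Definition in_irr_class (I : Type) (le : I -> I -> Prop) (x : I -> X) (y : X) : Prop :=
  is_preorder le /\ irr_converges le x y.

Definition iter_le (I : Type) (le : I -> I -> Prop) (J : I -> Type)
  (leJ : forall i, J i -> J i -> Prop)
  (p q : I * (forall i, J i)) : Prop :=
  le p.1 q.1 /\ forall l : I, leJ l (p.2 l) (q.2 l).

Definition iterated_limits : Prop :=
  forall (I : Type) (le : I -> I -> Prop) (x : I -> X) (y : X)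
         (J : I -> Type) (leJ : forall i, J i -> J i -> Prop)
         (xx : forall i, J i -> X),
    in_irr_class le x y ->
    (forall i, in_irr_class (leJ i) (xx i) (x i)) ->
    in_irr_class (iter_le le leJ)
      (fun p : I * (forall i, J i) => xx p.1 (p.2 p.1)) y.

End IrrDefs.

(* The nets supplied by the hypothesis are as simple as possible: index the
   sets E in Irr^+ with sup E >= x, take the constant net x over them, and
   over each such E the identity net on E.  The iterated net then picks one
   point f(E) in every E, and its Irr-limit x comes with a witness F in Irr^+
   every point of which is eventually below the net, in particular below f(E)
   for every E.  Hence F consists of points way below x.  By k-bounded
   sobriety the closure of F is the closure of a point above sup F >= x, so
   F is dense in the down-set of x, which contains all points way below x;
   irreducibility and the supremum pass from F to the set of all of them. *)
From mathcomp Require Import all_boot all_order.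
From mathcomp Require Import all_classical topology.
Local Open Scope classical_set_scope.

Section SpecialisationOrder.
Context {X : topologicalType}.
Implicit Types (x y z s : X) (E F G : set X).

Lemma closure_sub_closed {E F} : closed F -> E `<=` F -> closure E `<=` F.
Proof. by move=> cF EF; rewrite closureE; apply: smallest_sub. Qed.

Lemma spec_le_refl x : spec_le x x.
Proof. exact: subset_closure. Qed.

Lemma spec_le_trans {x y z} : spec_le x y -> spec_le y z -> spec_le x z.
Proof.
move=> xy yz; apply: (closure_sub_closed (@closed_closure _ [set z])) xy.
by move=> w ->.
Qed.

Lemma is_sup_set1 x : is_sup [set x] x.
Proof. by split=> [e ->|u]; [apply: spec_le_refl | apply]. Qed.

Lemma IrrPlus_set1 x : IrrPlus [set x].
Proof.
split; last by exists x; apply: is_sup_set1.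
split=> [|A1 A2 _ _ xA]; first by exists x.
by case: (xA x erefl) => ?; [left|right] => w ->.
Qed.

Lemma closure_sub_spec_le E s : (forall e, E e -> spec_le e s) ->
  closure E `<=` [set y | spec_le y s].
Proof. by move=> Es; apply: closure_sub_closed => //; apply: closed_closure. Qed.

Lemma irreducible_between E G : irreducible E -> E `<=` G -> G `<=` closure E ->
  irreducible G.
Proof.
move=> [[e Ee] Eirr] EG GE; split=> [|A1 A2 c1 c2 GA]; first by exists e; apply: EG.
have [EA|EA] := Eirr A1 A2 c1 c2 (subset_trans EG GA); [left|right];
  exact: subset_trans GE (closure_sub_closed _ EA).
Qed.

Lemma is_sup_closure E s : is_sup E s -> is_sup (closure E) s.
Proof.
move=> [Es Eleast]; split; first exact: closure_sub_spec_le.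
by move=> u Eu; apply: Eleast => e Ee; apply/Eu/subset_closure.
Qed.

Lemma IrrPlus_closure E : IrrPlus E -> IrrPlus (closure E).
Proof.
move=> [Eirr [s Es]]; split; last by exists s; apply: is_sup_closure.
by apply: irreducible_between Eirr (@subset_closure _ E) _.
Qed.

End SpecialisationOrder.

Section WayBelow.
Context {X : topologicalType}.
Implicit Types (x y : X) (E F : set X).

Definition IrrPlus_above x E : Prop :=
  IrrPlus E /\ exists s, is_sup E s /\ spec_le x s.

Lemma IrrPlus_above_set1 x : IrrPlus_above x [set x].
Proof.
split; first exact: IrrPlus_set1.
by exists x; split; [apply: is_sup_set1 | apply: spec_le_refl].
Qed.

Lemma irr_way_below_le x y : irr_way_below x y -> spec_le x y.
Proof.
move=> xy; have [e [-> ye]] := xy _ (IrrPlus_set1 y) y (is_sup_set1 y) (spec_le_refl y).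
exact: ye.
Qed.

Lemma irr_ddown_sub_closure x F : @k_bounded_sober X -> IrrPlus_above x F ->
  irr_ddown x `<=` closure F.
Proof.
move=> sober [FIrr [s [Fs xs]]].
have [z [clFz _]] := sober _ (@closed_closure _ F) (IrrPlus_closure _ FIrr).
have sz : spec_le s z.
  by apply: Fs.2 => e Fe; rewrite /spec_le -clFz; apply: subset_closure.
move=> a /irr_way_below_le ax; rewrite clFz.
exact: spec_le_trans ax (spec_le_trans xs sz).
Qed.

Lemma is_sup_irr_ddown x F s : is_sup F s -> spec_le x s -> F `<=` irr_ddown x ->
  is_sup (irr_ddown x) x.
Proof.
move=> Fs xs Fdd; split=> [a /irr_way_below_le //|u ddu].
by apply: spec_le_trans xs _; apply: Fs.2 => e /Fdd; apply: ddu.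
Qed.

End WayBelow.

Section Nets.
Context {X : topologicalType}.

Lemma in_irr_class_cst {I : Type} {le : I -> I -> Prop} (i0 : I) (x : X) :
  is_preorder le -> in_irr_class le (fun _ => x) x.
Proof.
move=> ple; split=> //; exists [set x]; split; first exact: IrrPlus_set1.
split; first by exists x; split; [apply: is_sup_set1 | apply: spec_le_refl].
by move=> e ->; exists i0 => _ _; apply: spec_le_refl.
Qed.

Lemma in_irr_class_sval {x : X} {E : set X} : IrrPlus_above x E ->
  in_irr_class (fun a b : {e | E e} => spec_le (sval a) (sval b)) sval x.
Proof.
move=> [EIrr Esup]; split.
  by split=> [a|a b c]; [apply: spec_le_refl | apply: spec_le_trans].
exists E; split=> //; split=> // e Ee.
by exists (exist _ e Ee) => i.
Qed.

Lemma iterated_limits_irr_ddown (x : X) : @iterated_limits X ->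
  exists F, IrrPlus_above x F /\ F `<=` irr_ddown x.
Proof.
move=> IL.
pose A := {E : set X | IrrPlus_above x E}.
pose J (i : A) := {e : X | sval i e}.
have x_lim : in_irr_class (fun _ _ : A => True) (fun _ => x) x.
  by apply: (in_irr_class_cst (exist _ _ (IrrPlus_above_set1 x)) x).
have E_lim (i : A) := in_irr_class_sval (svalP i).
have [_ [F [FIrr [Fsup Fconv]]]] := IL _ _ _ _ J _ _ x_lim E_lim.
exists F; split=> // a Fa E EIrr s Es xs.
have [[i f] af] := Fconv a Fa.
pose iE : A := exist _ E (conj EIrr (ex_intro _ s (conj Es xs))).
have := af (iE, f) (conj I (fun l => spec_le_refl _)).
by exists (sval (f iE)); split=> //; apply: (svalP (f iE)).
Qed.

End Nets.

Theorem lemma4p6 (X : topologicalType) :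
  @kolmogorov_space X -> @k_bounded_sober X -> @iterated_limits X ->
  @irr_continuous X.
Proof.
move=> _ sober IL x.
have [F [Fabove Fdd]] := iterated_limits_irr_ddown x IL.
have [[FIrr _] [s [Fs xs]]] := Fabove.
split; last exact: is_sup_irr_ddown Fs xs Fdd.
exact: irreducible_between FIrr Fdd (irr_ddown_sub_closure x F sober Fabove).
Qed.
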